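(* Let $K$ be a field, let $\mathcal R\subset\mathbb Z^k$ be a polyhedral region, and let $f$ be a hypergeometric term on $\mathcal R$. Then the function $g\colon\mathbb Z^k\to K$ defined by $g(\vec z)=f(\vec z)$ for $\vec z\in\mathcal R$ and $g(\vec z)=0$ for $\vec z\notin\mathcal R$ is a hypergeometric term on $\mathbb Z^k$.
   Context: A half-space is $\{\vec z\in\mathbb Z^k:\vec v\cdot\vec z>n\}$ with $\vec v\in\mathbb Z^k$, $n\in\mathbb Z$; a polyhedral region is $\mathbb Z^k$ or an intersection of finitely many half-spaces. A hypergeometric term on a polyhedral region $\mathcal R$ over $K$ is a function $f\colon\mathcal R\to K$ such that for each $i\in\{1,\dots,k\}$ there are nonzero polynomials $A_i,B_i\in K[z_1,\dots,z_k]$ with $A_i(\vec z)f(\vec z)=B_i(\vec z)f(\vec z+\vec e_i)$ for all $\vec z$ with $\vec z\in\mathcal R$ and $\vec z+\vec e_i\in\mathcal R$. A hypergeometric term on $\mathbb Z^k$ is the case $\mathcal R=\mathbb Z^k$. *)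

From HB Require Import structures.
From mathcomp Require Import all_boot all_order all_algebra.
From mathcomp Require Import mpoly.
Set Implicit Arguments. Unset Strict Implicit. Unset Printing Implicit Defensive.
Import Order.TTheory GRing.Theory Num.Theory.
Local Open Scope ring_scope.

Definition pt (k : nat) := 'I_k -> int.

Definition dotZ (k : nat) (v z : pt k) : int := \sum_(i < k) v i * z i.

Definition shiftZ (k : nat) (z : pt k) (i : 'I_k) : pt k :=
  fun j => z j + (j == i)%:Z.

Definition halfspace (k : nat) (v : pt k) (n : int) : pred (pt k) :=
  fun z => n < dotZ v z.

(* A polyhedral region is given by a finite list of half-spaces (v, n);
   the region is their intersection (the empty list gives all of Z^k). *)
Definition region (k : nat) (H : seq (pt k * int)) : pred (pt k) :=
  fun z => all (fun h => halfspace h.1 h.2 z) H.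

Definition evalZ (K : fieldType) (k : nat) (p : {mpoly K[k]}) (z : pt k) : K :=
  p.@[fun j => (z j)%:~R].

Definition hypergeometric_on (K : fieldType) (k : nat) (Rg : pred (pt k))
    (f : pt k -> K) : Prop :=
  forall i : 'I_k, exists A B : {mpoly K[k]}, A != 0 /\ B != 0 /\
    forall z : pt k, Rg z -> Rg (shiftZ z i) ->
      evalZ A z * f z = evalZ B z * f (shiftZ z i).

From HB Require Import structures.
From mathcomp Require Import all_boot all_order all_algebra.
From mathcomp Require Import mpoly zify.
From Stdlib Require Import Classical.
Set Implicit Arguments. Unset Strict Implicit. Unset Printing Implicit Defensive.
Import Order.TTheory GRing.Theory Num.Theory.
Local Open Scope ring_scope.

(** Multiplying both recurrence polynomials of [f] in direction [i] by a
    nonzero polynomial [P] that vanishes at every [z] for which exactly one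
    of [z], [z + e_i] lies in the region makes the recurrences hold for the
    zero extension on all of Z^k.  In characteristic 0 such a [P] exists:
    [z] and [z + e_i] lie on different sides of the hyperplane [v.z = n]
    only if [v.z] takes one of the [2 |v_i|] integer values in
    [(n - |v_i|, n + |v_i|]], and the corresponding linear factors
    [v.z - c] are nonzero polynomials; a product over the half-spaces
    handles the intersection.  In characteristic [p > 0] every function is
    hypergeometric, since [z_i (z_i - 1) ... (z_i - p + 1)] is a nonzero
    polynomial vanishing on all of Z^k. *)

Section Evaluation.
Variables (K : fieldType) (k : nat).

Lemma evalZM (p q : {mpoly K[k]}) z : evalZ (p * q) z = evalZ p z * evalZ q z.
Proof. by rewrite /evalZ mevalM. Qed.

Lemma evalZ_prod (I : Type) (r : seq I) (P : pred I) (F : I -> {mpoly K[k]}) z :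
  evalZ (\prod_(j <- r | P j) F j) z = \prod_(j <- r | P j) evalZ (F j) z.
Proof. by rewrite /evalZ rmorph_prod. Qed.

Lemma evalZ_XsubC (i : 'I_k) (c : K) z : evalZ ('X_i - c%:MP) z = (z i)%:~R - c.
Proof. by rewrite /evalZ mevalB mevalXU mevalC. Qed.

Lemma mpoly_neq0_meval (p : {mpoly K[k]}) (x : 'I_k -> K) : p.@[x] != 0 -> p != 0.
Proof. by apply: contraNneq => ->; rewrite meval0. Qed.

Lemma mpolyX_subC_neq0 (i : 'I_k) (c : K) : 'X_i - c%:MP != 0.
Proof.
apply: (@mpoly_neq0_meval _ (fun _ => c + 1)).
by rewrite mevalB mevalXU mevalC addrAC subrr add0r oner_neq0.
Qed.

Definition linZ (v : pt k) : {mpoly K[k]} := \sum_(j < k) (v j)%:~R *: 'X_j.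

Lemma meval_linZ (v : pt k) (x : 'I_k -> K) :
  (linZ v).@[x] = \sum_(j < k) (v j)%:~R * x j.
Proof. by rewrite /linZ rmorph_sum; apply: eq_bigr => j _ /=; rewrite mevalZ mevalXU. Qed.

Lemma evalZ_linZ (v : pt k) z : evalZ (linZ v) z = (dotZ v z)%:~R.
Proof.
rewrite /evalZ meval_linZ /dotZ (rmorph_sum (intr : int -> K)).
by apply: eq_bigr => j _ /=; rewrite intrM.
Qed.

Lemma linZ_subC_neq0 (v : pt k) (i : 'I_k) (c : K) :
  (v i)%:~R != 0 :> K -> linZ v - c%:MP != 0.
Proof.
move=> vi_neq0; pose x j := if j == i then (c + 1) / (v i)%:~R else 0.
apply: (@mpoly_neq0_meval _ x); rewrite mevalB meval_linZ mevalC.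
rewrite (bigD1 i) //= big1 => [|j /negbTE ji]; last by rewrite /x ji mulr0.
by rewrite /x eqxx addr0 mulrC mulfVK // addrAC subrr add0r oner_neq0.
Qed.

End Evaluation.
Arguments linZ {K k} v.

Lemma dotZ_shift (k : nat) (v z : pt k) (i : 'I_k) :
  dotZ v (shiftZ z i) = dotZ v z + v i.
Proof.
rewrite /dotZ /shiftZ; under eq_bigr do rewrite mulrDr.
rewrite big_split /=; congr +%R.
by rewrite (bigD1 i) //= eqxx mulr1 big1 ?addr0 // => j /negbTE ->; rewrite mulr0.
Qed.

Section PositiveCharacteristic.
Variables (K : fieldType) (k : nat) (q : nat).
Hypotheses (q_gt0 : (0 < q)%N) (q_eq0 : q%:R = 0 :> K).

Lemma prod_intr_subn_eq0 (x : int) : \prod_(t < q) (x%:~R - t%:R) = 0 :> K.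
Proof.
have q_neq0 : q%:Z != 0 by lia.
have r_ge0 := modz_ge0 x q_neq0.
have r_lt : (absz (x %% q)%Z < q)%N.
  by have := @ltz_pmod x q; rewrite ltz_nat q_gt0 => /(_ isT); lia.
apply/eqP; rewrite prodf_seq_eq0; apply/hasP; exists (Ordinal r_lt) => /=.
  exact: mem_index_enum.
rewrite -[(absz _)%:R]/(((absz (x %% q)%Z)%:Z)%:~R : K) gez0_abs //.
rewrite -intrB {1}(divz_eq x q) addrK.
by rewrite intrM -[(q%:Z)%:~R]/(q%:R : K) q_eq0 mulr0.
Qed.

Lemma hypergeometric_on_pchar (Rg : pred (pt k)) (f : pt k -> K) :
  hypergeometric_on Rg f.
Proof.
move=> i; pose Z : {mpoly K[k]} := \prod_(t < q) ('X_i - (t%:R : K)%:MP).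
have Z_neq0 : Z != 0 by apply/prodf_neq0 => t _; apply: mpolyX_subC_neq0.
have Z_eval z : evalZ Z z = 0.
  by rewrite evalZ_prod; under eq_bigr do rewrite evalZ_XsubC; apply: prod_intr_subn_eq0.
by exists Z, Z; split=> //; split=> // z _ _; rewrite !Z_eval !mul0r.
Qed.

End PositiveCharacteristic.

Definition annihilates_boundary (K : fieldType) (k : nat) (Rg : pred (pt k))
    (i : 'I_k) (P : {mpoly K[k]}) : Prop :=
  P != 0 /\ forall z, Rg z != Rg (shiftZ z i) -> evalZ P z = 0.

Lemma hypergeometric_on_extend0 (K : fieldType) (k : nat) (Rg : pred (pt k))
    (f : pt k -> K) :
  (forall i, exists P : {mpoly K[k]}, annihilates_boundary Rg i P) ->
  hypergeometric_on Rg f ->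
  hypergeometric_on (fun _ => true) (fun z => if Rg z then f z else 0).
Proof.
move=> hP hf i; have [A [B [A_neq0 [B_neq0 hAB]]]] := hf i.
have [P [P_neq0 P_eval]] := hP i.
exists (A * P), (B * P); split; first by rewrite mulf_neq0.
split=> [|z _ _]; first by rewrite mulf_neq0.
rewrite !evalZM.
case Rz: (Rg z); case Rz': (Rg (shiftZ z i)); rewrite ?mulr0 //.
- by rewrite mulrAC hAB // mulrAC.
- by rewrite P_eval ?mulr0 ?mul0r ?Rz ?Rz'.
- by rewrite P_eval ?mulr0 ?mul0r ?Rz ?Rz'.
Qed.

Section Boundary.
Variables (K : fieldType) (k : nat) (i : 'I_k).

Lemma annihilates_boundaryT :
  annihilates_boundary (fun _ => true) i (1 : {mpoly K[k]}).
Proof. by split=> //; apply: oner_neq0. Qed.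

Lemma annihilates_boundaryI (R1 R2 : pred (pt k)) (P1 P2 : {mpoly K[k]}) :
  annihilates_boundary R1 i P1 -> annihilates_boundary R2 i P2 ->
  annihilates_boundary (fun z => R1 z && R2 z) i (P1 * P2).
Proof.
move=> [P1_neq0 P1_eval] [P2_neq0 P2_eval]; split; first by rewrite mulf_neq0.
move=> z; rewrite evalZM.
have [R1z|/P1_eval ->] := eqVneq (R1 z) (R1 (shiftZ z i)); last by rewrite mul0r.
by rewrite R1z; case: (R1 _) => // /P2_eval ->; rewrite mulr0.
Qed.

Lemma halfspace_crossing (v : pt k) (n : int) z :
  halfspace v n z != halfspace v n (shiftZ z i) ->
  exists2 t : nat, (t < 2 * absz (v i))%N & dotZ v z = n - (absz (v i))%:Z + 1 + t%:Z.
Proof.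
rewrite /halfspace dotZ_shift; move: (dotZ v z) (v i) => d c crossing.
by exists (absz (d - n - 1 + (absz c)%:Z)); move: crossing; case: ltP; case: ltP; lia.
Qed.

Hypothesis intr_neq0 : forall c : int, c != 0 -> c%:~R != 0 :> K.

Lemma annihilates_boundary_halfspace (v : pt k) (n : int) :
  exists P : {mpoly K[k]}, annihilates_boundary (halfspace v n) i P.
Proof.
exists (\prod_(t < 2 * absz (v i))
          (linZ v - ((n - (absz (v i))%:Z + 1 + t%:Z)%:~R)%:MP)); split.
  apply/prodf_neq0 => t _; apply: (linZ_subC_neq0 (i := i)); apply: intr_neq0.
  by have := ltn_ord t; lia.
move=> z /halfspace_crossing [t t_lt dot_eq]; rewrite evalZ_prod.
apply/eqP; rewrite prodf_seq_eq0; apply/hasP; exists (Ordinal t_lt) => /=.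
  exact: mem_index_enum.
by rewrite /evalZ mevalB mevalC -/(evalZ _ z) evalZ_linZ dot_eq subrr.
Qed.

Lemma annihilates_boundary_region (H : seq (pt k * int)) :
  exists P : {mpoly K[k]}, annihilates_boundary (region H) i P.
Proof.
elim: H => [|h H [P hP]]; first by exists 1; apply: annihilates_boundaryT.
have [Ph hPh] := annihilates_boundary_halfspace h.1 h.2.
by exists (Ph * P); apply: annihilates_boundaryI.
Qed.

End Boundary.

Lemma intr_neq0_no_pchar (K : fieldType) :
  ~ (exists2 q : nat, (0 < q)%N & q%:R = 0 :> K) ->
  forall c : int, c != 0 -> c%:~R != 0 :> K.
Proof.
move=> no_pchar [n|n] c_neq0; last rewrite NegzE mulrNz oppr_eq0;
  apply/negP => /eqP cK0; apply: no_pchar.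
- by exists n => //; lia.
- by exists n.+1.
Qed.

Theorem mainTheorem16 (K : fieldType) (k : nat) (H : seq (pt k * int))
    (f : pt k -> K) :
  hypergeometric_on (region H) f ->
  hypergeometric_on (fun _ => true)
    (fun z => if region H z then f z else 0).
Proof.
move=> hf.
have [[q q_gt0 q_eq0]|no_pchar] :=
  classic (exists2 q : nat, (0 < q)%N & q%:R = 0 :> K).
  exact: hypergeometric_on_pchar q_gt0 q_eq0 _ _.
apply: hypergeometric_on_extend0 hf => i.
by apply: annihilates_boundary_region; apply: intr_neq0_no_pchar.
Qed.
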